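(* For every integer $k\ge 0$, $$\lim_{N\to\infty}\Pr[\mathcal{L}_N=k]=\frac{e^{-1}}{k!},$$ i.e. $\mathcal{L}_N$ converges in distribution to a Poisson random variable with mean $1$.
   Context: A random recursive hypergraph (RRH) is the random hypergraph process defined as follows. At size $N=1$ it has vertex set $\{v_1\}$ and edge set $\{\{v_1\}\}$. Given the hypergraph of size $N$ (vertices $v_1,\dots,v_N$, exactly $N$ edges), one chooses an existing edge $e$ uniformly at random, independently of the past, and adds a new vertex $v_{N+1}$ together with the new edge $e\cup\{v_{N+1}\}$. A leaf is a vertex $v\neq v_1$ such that the only edge containing $v$ is $\{v_1,v\}$. $\mathcal{L}_N$ denotes the number of leaves in the RRH of size $N$. *)

From HB Require Import structures.
From mathcomp Require Import all_boot all_order all_algebra.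
From mathcomp Require Import all_classical all_reals all_analysis.
Set Implicit Arguments. Unset Strict Implicit. Unset Printing Implicit Defensive.
Import Order.TTheory GRing.Theory Num.Theory.

(* Vertices v_1, ..., v_N are encoded as the naturals 0, ..., N-1
   (v_1 = 0).  Edges are encoded as lists of vertices (read as sets).
   Edges are indexed by creation order: edge 0 is {v_1}.

   A history of the RRH up to size N is the list [c_1; ...; c_{N-1}]
   of the edge indices chosen at each step, where at step n (going from
   size n to size n+1) the chosen index c_n ranges over {0, ..., n-1}. *)

(* All histories leading to size N (each has probability 1/(N-1)!). *)
Fixpoint rrh_histories (N : nat) : seq (seq nat) :=
  match N with
  | 0 => [::]
  | 1 => [:: [::]]
  | n.+1 => [seq rcons h c | h <- rrh_histories n, c <- iota 0 n]
  end.

Definition rrh_edges (h : seq nat) : seq (seq nat) :=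
  foldl (fun E c => rcons E (rcons (nth [::] E c) (size E))) [:: [:: 0]] h.

Definition is_pair0 (v : nat) (e : seq nat) : bool :=
  [&& 0 \in e, v \in e & all (fun x => (x == 0) || (x == v)) e].

Definition is_leaf (E : seq (seq nat)) (v : nat) : bool :=
  (v != 0) && ([seq e <- E | v \in e] != [::])
  && all (is_pair0 v) [seq e <- E | v \in e].

Definition num_leaves (N : nat) (h : seq nat) : nat :=
  count (is_leaf (rrh_edges h)) (iota 0 N).

(* Pr[L_N = k] under the uniform, independent choice of edges. *)
Definition prob_leaves (R : realType) (N k : nat) : R :=
  (count (fun h => num_leaves N h == k) (rrh_histories N))%:R
  / (size (rrh_histories N))%:R.

From HB Require Import structures.
From mathcomp Require Import all_boot all_order all_algebra.
From mathcomp Require Import all_classical all_reals all_analysis.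
From mathcomp Require Import zify ring lra.
Import Order.TTheory GRing.Theory Num.Theory.
Import numFieldNormedType.Exports.
Set Implicit Arguments. Unset Strict Implicit.

(* Since every history of size N has probability 1/(N-1)!, the statement is
   about the number [leaf_count N k] of histories producing k leaves.
   1. Growth step.  Histories satisfy a shape invariant ([rrh_shape]); when
      edge c is extended by the new vertex N, the new vertex is a leaf iff
      c = 0, and the only old leaf that can disappear is c itself
      ([count_leaves_grow]).  Hence a history with l leaves has 1 extension
      with l+1 leaves, l with l-1 leaves and N-1-l with l leaves.
   2. Recurrence.  Summing over histories gives
        cnt(n+2,k) = cnt(n+1,k-1) + (k+1) cnt(n+1,k+1) + (n-k) cnt(n+1,k)
      ([leaf_count_step]).
   3. Closed form.  With S_m = sum_(i<m) (-1)^i/i!, which satisfies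
      (m+1) S_(m+2) = m S_(m+1) + S_m, induction gives
      cnt(n+1,k) k! = n! S_(n+1-k) ([leaf_count_formula]), i.e.
      Pr[L_(n+1) = k] = S_(n+1-k) / k!.
   4. Limit.  S_m is a partial sum of the exponential series at -1, so
      Pr[L_N = k] tends to e^-1 / k!. *)

Definition rrh_grow (E : seq (seq nat)) (c : nat) : seq (seq nat) :=
  rcons E (rcons (nth [::] E c) (size E)).

Definition rrh_shape (N : nat) (E : seq (seq nat)) : Prop :=
  [/\ size E = N, nth [::] E 0 = [:: 0],
     (forall j, 0 < j < N -> j \in nth [::] E j) &
     (forall e, e \in E -> forall x, x \in e -> x < N)]%N.

Lemma rrh_edges_rcons h c : rrh_edges (rcons h c) = rrh_grow (rrh_edges h) c.
Proof. by rewrite /rrh_edges foldl_rcons. Qed.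

Lemma rrh_histories_SS N : rrh_histories N.+2 =
  [seq rcons h c | h <- rrh_histories N.+1, c <- iota 0 N.+1].
Proof. by []. Qed.

Lemma size_rrh_histories n : size (rrh_histories n.+1) = n`!.
Proof.
by elim: n => // n IH; rewrite rrh_histories_SS size_allpairs IH size_iota factS mulnC.
Qed.

Lemma rrh_shape_grow N E c : (0 < N)%N -> (c < N)%N -> rrh_shape N E ->
  rrh_shape N.+1 (rrh_grow E c).
Proof.
move=> N0 cN [sE E0 Ej Ex]; have EcE : nth [::] E c \in E by rewrite mem_nth ?sE.
split; rewrite /rrh_grow.
- by rewrite size_rcons sE.
- by rewrite nth_rcons sE N0.
- move=> j /andP[j0]; rewrite ltnS leq_eqVlt nth_rcons sE => /orP[/eqP->|jN].
    by rewrite ltnn eqxx mem_rcons mem_head.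
  by rewrite jN Ej ?j0.
- move=> e; rewrite mem_rcons in_cons => /orP[/eqP->|eE] x.
    by rewrite mem_rcons in_cons => /orP[/eqP->|/(Ex _ EcE)/ltnW]; rewrite ?sE.
  by move/(Ex _ eE)/ltnW.
Qed.

Lemma rrh_shape_histories N h : h \in rrh_histories N.+1 ->
  rrh_shape N.+1 (rrh_edges h).
Proof.
elim: N h => [|N IH] h.
  rewrite inE => /eqP->; split => //; first by case=> // j /andP[].
  by move=> e; rewrite inE => /eqP-> x; rewrite inE => /eqP->.
rewrite rrh_histories_SS => /allpairsP[[h' c] [/IH Hh' /[!mem_iota] cN ->]].
by rewrite rrh_edges_rcons; apply: rrh_shape_grow.
Qed.

Lemma leaf_pair E v e : is_leaf E v -> e \in E -> v \in e -> is_pair0 v e.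
Proof. by case/andP=> _ /allP leafv eE ve; apply: leafv; rewrite mem_filter ve. Qed.

Lemma count_split (T : Type) (a b : pred T) (s : seq T) :
  count a s = (count (fun x => a x && b x) s + count (fun x => a x && ~~ b x) s)%N.
Proof. by elim: s => //= x s ->; case: (a x); case: (b x) => /=; lia. Qed.

Section GrowthStep.
Variables (N c : nat) (E : seq (seq nat)).
Hypotheses (N_gt0 : (0 < N)%N) (cN : (c < N)%N) (shapeE : rrh_shape N E).

Let EcE : nth [::] E c \in E.
Proof. by case: shapeE => sE _ _ _; rewrite mem_nth ?sE. Qed.

Lemma leaf_in_edge j v : (j < N)%N -> is_leaf E v -> v \in nth [::] E j -> v = j.
Proof.
case: shapeE => sE E0 Ej _ jN Lv vj.
have EjE : nth [::] E j \in E by rewrite mem_nth ?sE.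
have /and3P[_ _ /allP pairv] := leaf_pair Lv EjE vj.
case: j jN vj pairv {EjE} => [|j] jN vj pairv.
  by move: vj Lv; rewrite E0 inE => /eqP->.
by case/orP: (pairv _ (Ej j.+1 jN)) => /eqP.
Qed.

Lemma is_leaf_grow_new : is_leaf (rrh_grow E c) N = (c == 0%N).
Proof.
case: shapeE => sE E0 Ej Ex.
have noN : [seq e <- E | N \in e] = [::].
  apply/eqP; rewrite -(filter_pred0 E) (eq_in_filter (a2 := pred0)) // => e eE /=.
  by apply/negbTE/negP => /(Ex e eE); rewrite ltnn.
rewrite /is_leaf /rrh_grow filter_rcons sE mem_rcons mem_head noN /= -lt0n N_gt0 /=.
rewrite /is_pair0 !mem_rcons mem_head all_rcons eqxx orbT /= andbT.
rewrite in_cons eq_sym (gtn_eqF N_gt0) /=.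
rewrite (eq_in_all (a2 := pred1 0%N)); last first.
  by move=> x /(Ex _ EcE) xN /=; rewrite (ltn_eqF xN) orbF.
case: c cN => [|j] jN; first by rewrite E0.
by apply/negbTE/andP => -[_ /allP/(_ _ (Ej j.+1 jN))].
Qed.

Lemma is_leaf_grow_old v : (v < N)%N ->
  is_leaf (rrh_grow E c) v = is_leaf E v && (v \notin nth [::] E c).
Proof.
case: shapeE => sE _ _ _ vN.
rewrite /is_leaf /rrh_grow filter_rcons sE mem_rcons in_cons (ltn_eqF vN) /=.
case: (boolP (v \in nth [::] E c)) => vc; last by rewrite !andbT.
by rewrite andbF all_rcons /is_pair0 all_rcons (gtn_eqF N_gt0) (gtn_eqF vN) /= !andbF.
Qed.

Lemma count_leaves_in_edge :
  count (fun v => is_leaf E v && (v \in nth [::] E c)) (iota 0 N) = is_leaf E c.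
Proof.
case: shapeE => _ _ Ej _; have [Lc|nLc] := boolP (is_leaf E c).
  rewrite (eq_count (a2 := pred1 c)) ?count_uniq_mem ?iota_uniq ?mem_iota ?cN // => v /=.
  apply/andP/eqP => [[Lv vc]|->]; first exact: leaf_in_edge cN Lv vc.
  split=> //.
  by apply: Ej; rewrite cN andbT lt0n; case/andP: Lc => /andP[].
rewrite (eq_count (a2 := pred0)) ?count_pred0 // => v /=.
apply/andP => -[Lv vc]; have v_c := leaf_in_edge cN Lv vc; subst v.
by rewrite Lv in nLc.
Qed.

(* Leaf balance of one step: vertex N is a new leaf iff [c] = 0, and the
   only old leaf that can be lost is [c] itself. *)
Lemma count_leaves_grow :
  (count (is_leaf (rrh_grow E c)) (iota 0 N.+1) + is_leaf E c
   = count (is_leaf E) (iota 0 N) + (c == 0%N))%N.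
Proof.
rewrite -addn1 iotaD count_cat /= add0n is_leaf_grow_new addn0.
rewrite (eq_in_count (a2 := fun v => is_leaf E v && (v \notin nth [::] E c))); last first.
  by move=> v; rewrite mem_iota add0n => vN; exact: is_leaf_grow_old.
rewrite -count_leaves_in_edge.
rewrite [count (is_leaf E) _](count_split _ (fun v => v \in nth [::] E c)).
by rewrite addnAC; congr (_ + _)%N; rewrite addnC.
Qed.

End GrowthStep.

Lemma count_if_eq (T : Type) (p : pred T) (a b k : nat) (s : seq T) :
  count (fun x => (if p x then a else b) == k) s =
  (count p s * (a == k) + count (predC p) s * (b == k))%N.
Proof. by elim: s => //= x s ->; case: (p x) => /=; lia. Qed.

(* Regrouping the transition weights of a history with [l] leaves by the
   number of leaves before the step. *)
Lemma leaf_weights l n k :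
  (l * (l.-1 == k) + (n - l) * (l == k) = (l == k.+1) * k.+1 + (l == k) * (n - k))%N.
Proof.
case: l => [|l]; first by case: k => [|k] /=; lia.
rewrite /= eqSS; have [->|lk] := eqVneq l k.
  by rewrite (gtn_eqF (ltnSn k)); lia.
by rewrite muln0 mul0n mulnC; case: (eqVneq l.+1 k) => [<-|].
Qed.

Lemma num_leaves_rcons n h c : h \in rrh_histories n.+1 -> (c < n.+1)%N ->
  num_leaves n.+2 (rcons h c) =
  if c == 0%N then (num_leaves n.+1 h).+1
  else if is_leaf (rrh_edges h) c then (num_leaves n.+1 h).-1
  else num_leaves n.+1 h.
Proof.
move=> /rrh_shape_histories shape cN.
have := count_leaves_grow (ltn0Sn n) cN shape.
rewrite /num_leaves rrh_edges_rcons.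
by case: (c =P 0%N) => [->|_] /=; last case: (is_leaf _ c); lia.
Qed.

Lemma count_num_leaves_rcons n h k : h \in rrh_histories n.+1 ->
  let l := num_leaves n.+1 h in
  count (fun c => num_leaves n.+2 (rcons h c) == k) (iota 0 n.+1) =
  ((l.+1 == k) + (l == k.+1) * k.+1 + (l == k) * (n - k))%N.
Proof.
move=> hH l.
rewrite -addnA -leaf_weights /= (num_leaves_rcons hH (ltn0Sn n)) /=.
congr (_ + _)%N.
have lE : l = count (is_leaf (rrh_edges h)) (iota 1 n) by [].
rewrite (eq_in_count (a2 := fun c => (if is_leaf (rrh_edges h) c then l.-1 else l) == k)).
  have lC : count (predC (is_leaf (rrh_edges h))) (iota 1 n) = (n - l)%N.
    rewrite lE -[X in (X - _)%N](size_iota 1 n).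
    by rewrite -(count_predC (is_leaf (rrh_edges h))) addKn.
  by rewrite count_if_eq -lE lC.
move=> c; rewrite mem_iota add1n ltnS => /andP[c0 cN].
by rewrite num_leaves_rcons ?(gtn_eqF c0).
Qed.

Definition leaf_count (N k : nat) : nat :=
  count (fun h => num_leaves N h == k) (rrh_histories N).

Lemma leaf_count1 k : leaf_count 1 k = (k == 0%N).
Proof. by case: k. Qed.

Lemma sum_nat_of_bool (T : Type) (a : pred T) (s : seq T) :
  (\sum_(x <- s) (a x : nat))%N = count a s.
Proof. by rewrite -sumn_count sumnE big_map. Qed.

Lemma leaf_count_step n k : leaf_count n.+2 k =
  ((if k is j.+1 then leaf_count n.+1 j else 0)
   + leaf_count n.+1 k.+1 * k.+1 + leaf_count n.+1 k * (n - k))%N.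
Proof.
rewrite /leaf_count rrh_histories_SS count_flatten sumnE !big_map.
under eq_big_seq => h hH do rewrite count_map (count_num_leaves_rcons k hH).
rewrite !big_split -!big_distrl !sum_nat_of_bool.
by case: k => [|j] //; rewrite (eq_count (a2 := pred0)) // count_pred0.
Qed.

Local Open Scope ring_scope.

Section ExponentialPartialSums.
Variable R : realType.

Definition exp_neg1_sum (m : nat) : R := series (exp_coeff (-1)) m.

Lemma exp_neg1_sum0 : exp_neg1_sum 0 = 0.
Proof. by rewrite /exp_neg1_sum /series /= big_geq. Qed.

Lemma exp_neg1_sum1 : exp_neg1_sum 1 = 1.
Proof.
rewrite /exp_neg1_sum seriesSr -/(exp_neg1_sum 0) exp_neg1_sum0 /exp_coeff /=.
by rewrite add0r expr0 divr1.
Qed.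

Lemma fact_neq0 n : (n`!)%:R != 0 :> R.
Proof. by rewrite pnatr_eq0 -lt0n fact_gt0. Qed.

Lemma exp_neg1_sum_rec m :
  m.+1%:R * exp_neg1_sum m.+2 = m%:R * exp_neg1_sum m.+1 + exp_neg1_sum m.
Proof.
rewrite /exp_neg1_sum !seriesSr /exp_coeff /= exprS factS natrM.
have mS : m%:R + 1 != 0 :> R by rewrite natr1 pnatr_eq0.
by rewrite -natr1; field; rewrite mS fact_neq0.
Qed.

(* The identity behind the leaf-count recurrence, with truncated
   subtraction: for k <= n it is [exp_neg1_sum_rec] at m = n - k, and for
   k > n both sides reduce through S_0 = 0, S_1 = 1. *)
Lemma exp_neg1_sum_step n k :
  n.+1%:R * exp_neg1_sum (n.+2 - k) =
  k%:R * exp_neg1_sum (n.+2 - k) + exp_neg1_sum (n - k)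
  + (n - k)%:R * exp_neg1_sum (n.+1 - k).
Proof.
case: (ltngtP k n.+1) => [kn|nk|->].
- have [m ->] : exists m, n = (k + m)%N by exists (n - k)%N; lia.
  have -> : ((k + m).+2 - k = m.+2)%N by lia.
  have -> : ((k + m).+1 - k = m.+1)%N by lia.
  rewrite addKn -addnS natrD mulrDl exp_neg1_sum_rec; ring.
- have -> : (n.+2 - k = 0)%N by lia.
  have -> : (n.+1 - k = 0)%N by lia.
  have -> : (n - k = 0)%N by lia.
  by rewrite exp_neg1_sum0 !mulr0 !addr0.
- have -> : (n - n.+1 = 0)%N by lia.
  by rewrite subSnn subnn exp_neg1_sum1 exp_neg1_sum0 mul0r !addr0.
Qed.
End ExponentialPartialSums.

Lemma leaf_count_formula (R : realType) n k :
  (leaf_count n.+1 k)%:R * k`!%:R = n`!%:R * exp_neg1_sum R (n.+1 - k).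
Proof.
elim: n k => [|n IHn] k.
  rewrite leaf_count1 fact0 mul1r; case: k => [|j]; first by rewrite exp_neg1_sum1 mulr1.
  have -> : (1 - j.+1 = 0)%N by lia.
  by rewrite exp_neg1_sum0 /= mul0r.
rewrite (leaf_count_step n k) factS natrM [_ * n`!%:R]mulrC -mulrA exp_neg1_sum_step.
rewrite !mulrDr [_ * (k%:R * _)]mulrCA [_ * ((n - k)%:R * _)]mulrCA.
have := IHn k.+1; rewrite subSS => <-; rewrite -IHn.
case: k => [|j]; first by rewrite fact0 !natrD !natrM; ring.
rewrite -IHn !factS !natrD !natrM; ring.
Qed.

Lemma prob_leaves_formula (R : realType) n k :
  prob_leaves R n.+1 k = exp_neg1_sum R (n.+1 - k) / k`!%:R.
Proof.
rewrite /prob_leaves -/(leaf_count n.+1 k) size_rrh_histories.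
rewrite -[(leaf_count _ _)%:R](mulfK (fact_neq0 R k)) leaf_count_formula.
by field; rewrite !fact_neq0.
Qed.

Local Open Scope classical_set_scope.

Theorem mainTheorem12 (R : realType) (k : nat) :
  (fun N : nat => prob_leaves R N k) @ \oo --> (expR (-1) / (k`!)%:R : R).
Proof.
rewrite -(cvg_shiftn k.+1).
have -> : [sequence prob_leaves R (n + k.+1) k]_n =
          (fun n => exp_neg1_sum R n.+1 / k`!%:R).
  by apply: funext => n /=; rewrite addnS prob_leaves_formula -addSn addnK.
apply: cvgMr_tmp; rewrite (cvg_shiftS (exp_neg1_sum R)).
exact: is_cvg_series_exp_coeff.
Qed.
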